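(* Assume $a_1\ge5$ and $a_2=1$. Let $\mu=k\Lambda_1-l\Lambda_2\in P$ with $k,l\in\mathbb Z$, and let $\{p^\mu_m\}_{m\in\mathbb Z}$ be defined by $p^\mu_0=l$, $p^\mu_1=k$, $p^\mu_{m+2}=a_2p^\mu_{m+1}-p^\mu_m$ ($m\ge0$ even), $p^\mu_{m+2}=a_1p^\mu_{m+1}-p^\mu_m$ ($m\ge0$ odd), and for $m<0$: $p^\mu_m=a_2p^\mu_{m+1}-p^\mu_{m+2}$ ($m$ even), $p^\mu_m=a_1p^\mu_{m+1}-p^\mu_{m+2}$ ($m$ odd). (1) If there exists $n\in\mathbb Z$ with $0<p^\mu_{2n}\le p^\mu_{2n+2}$, then $0<p^\mu_{2m}\le p^\mu_{2m+2}$ for all $m\ge n$. (2) If there exists $n\in\mathbb Z$ with $0<p^\mu_{2n}\le p^\mu_{2n-2}$, then $0<p^\mu_{2m}\le p^\mu_{2m-2}$ for all $m\le n$.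
   Context: $a_1,a_2$ are positive integers (here $a_2=1$, $a_1\ge5$), and $P=\mathbb Z\Lambda_1\oplus\mathbb Z\Lambda_2$ is the weight lattice of the Kac–Moody algebra with generalized Cartan matrix $\begin{pmatrix}2&-a_1\\-a_2&2\end{pmatrix}$, with fundamental weights $\Lambda_1,\Lambda_2$. *)

From Stdlib Require Import ZArith.
Open Scope Z_scope.

Definition pcoef (a1 a2 m : Z) : Z := if Z.even m then a2 else a1.

(* Forward iteration: pfw n = (p_n, p_(n+1)) for n >= 0,
   using p_(m+2) = pcoef m * p_(m+1) - p_m. *)
Fixpoint pfw (a1 a2 k l : Z) (n : nat) : Z * Z :=
  match n with
  | O => (l, k)
  | S n' => let (x, y) := pfw a1 a2 k l n' in
            (y, pcoef a1 a2 (Z.of_nat n') * y - x)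
  end.

(* Backward iteration: pbw n = (p_(-n), p_(-n+1)),
   using p_m = pcoef m * p_(m+1) - p_(m+2) for m < 0. *)
Fixpoint pbw (a1 a2 k l : Z) (n : nat) : Z * Z :=
  match n with
  | O => (l, k)
  | S n' => let (x, y) := pbw a1 a2 k l n' in
            (pcoef a1 a2 (- Z.of_nat n' - 1) * x - y, x)
  end.

Definition pmu (a1 a2 k l m : Z) : Z :=
  if 0 <=? m then fst (pfw a1 a2 k l (Z.to_nat m))
  else fst (pbw a1 a2 k l (Z.to_nat (- m))).

(* The even-indexed terms q n := p_(2n) satisfy q (n+1) = (a1 a2 - 2) q n - q (n-1).
   For such a recurrence with coefficient c >= 2, q (n+2) - q (n+1) = (c - 2) q (n+1)
   + (q (n+1) - q n), so being positive and nondecreasing propagates forward.  The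
   recurrence is invariant under n |-> -n, which turns the forward statement into the
   backward one. *)

From Stdlib Require Import ZArith Lia.
Open Scope Z_scope.

Definition three_term_rec (c : Z) (q : Z -> Z) : Prop :=
  forall n, q (n + 1) = c * q n - q (n - 1).

Lemma three_term_rec_opp (c : Z) (q : Z -> Z) :
  three_term_rec c q -> three_term_rec c (fun n => q (- n)).
Proof.
  intros hq n; cbv beta.
  specialize (hq (- n)).
  replace (- (n + 1)) with (- n - 1) by ring.
  replace (- (n - 1)) with (- n + 1) by ring.
  lia.
Qed.

Section PositiveMonotone.

Variables (c : Z) (q : Z -> Z).
Hypothesis hc : 2 <= c.
Hypothesis hq : three_term_rec c q.

Lemma three_term_rec_nondecr_step (n : Z) :
  0 < q n <= q (n + 1) -> 0 < q (n + 1) <= q (n + 1 + 1).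
Proof.
  intros hn.
  rewrite (hq (n + 1)), Z.add_simpl_r.
  nia.
Qed.

Lemma three_term_rec_nondecr_from (n : Z) :
  0 < q n <= q (n + 1) -> forall m, n <= m -> 0 < q m <= q (m + 1).
Proof.
  intros hn.
  apply Z.le_ind; [now intros x y -> | exact hn |].
  intros m _ hm.
  rewrite <- Z.add_1_r.
  now apply three_term_rec_nondecr_step.
Qed.

End PositiveMonotone.

Lemma three_term_rec_nonincr_until (c : Z) (q : Z -> Z) :
  2 <= c -> three_term_rec c q ->
  forall n, 0 < q n <= q (n - 1) -> forall m, m <= n -> 0 < q m <= q (m - 1).
Proof.
  intros hc hq n hn m hm.
  assert (hopp := three_term_rec_nondecr_from c (fun n => q (- n)) hc
                    (three_term_rec_opp c q hq) (- n)).
  cbv beta in hopp.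
  rewrite Z.opp_add_distr, !Z.opp_involutive in hopp.
  specialize (hopp hn (- m) ltac:(lia)).
  now rewrite Z.opp_add_distr, !Z.opp_involutive in hopp.
Qed.

Section Pmu.

Variables a1 a2 k l : Z.
Notation p := (pmu a1 a2 k l).

Lemma pcoef_even (n : Z) : pcoef a1 a2 (2 * n) = a2.
Proof. unfold pcoef; now rewrite Z.even_even. Qed.

Lemma pcoef_odd (n : Z) : pcoef a1 a2 (2 * n + 1) = a1.
Proof. unfold pcoef; now rewrite Z.even_odd. Qed.

Lemma pfw_succ (n : nat) :
  pfw a1 a2 k l (S n) =
  (snd (pfw a1 a2 k l n),
   pcoef a1 a2 (Z.of_nat n) * snd (pfw a1 a2 k l n) - fst (pfw a1 a2 k l n)).
Proof. simpl; now destruct (pfw a1 a2 k l n). Qed.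

Lemma pbw_succ (n : nat) :
  pbw a1 a2 k l (S n) =
  (pcoef a1 a2 (- Z.of_nat n - 1) * fst (pbw a1 a2 k l n) - snd (pbw a1 a2 k l n),
   fst (pbw a1 a2 k l n)).
Proof. simpl; now destruct (pbw a1 a2 k l n). Qed.

Lemma pmu_of_nat (n : nat) : p (Z.of_nat n) = fst (pfw a1 a2 k l n).
Proof.
  unfold pmu.
  rewrite Nat2Z.id, (proj2 (Z.leb_le _ _)) by lia.
  reflexivity.
Qed.

Lemma pmu_of_nat_add1 (n : nat) : p (Z.of_nat n + 1) = snd (pfw a1 a2 k l n).
Proof.
  replace (Z.of_nat n + 1) with (Z.of_nat (S n)) by lia.
  now rewrite pmu_of_nat, pfw_succ.
Qed.

Lemma pmu_opp_of_nat (n : nat) : p (- Z.of_nat n) = fst (pbw a1 a2 k l n).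
Proof.
  unfold pmu; destruct n as [|n]; [reflexivity|].
  rewrite (proj2 (Z.leb_gt _ _)) by lia.
  now rewrite Z.opp_involutive, Nat2Z.id.
Qed.

Lemma pmu_opp_of_nat_add1 (n : nat) : p (- Z.of_nat n + 1) = snd (pbw a1 a2 k l n).
Proof.
  destruct n as [|n]; [reflexivity|].
  replace (- Z.of_nat (S n) + 1) with (- Z.of_nat n) by lia.
  now rewrite pmu_opp_of_nat, pbw_succ.
Qed.

Lemma pmu_rec (m : Z) : p (m + 2) = pcoef a1 a2 m * p (m + 1) - p m.
Proof.
  destruct (Z_le_gt_dec 0 m) as [hm | hm].
  - destruct (Z_of_nat_complete _ hm) as [n ->].
    replace (Z.of_nat n + 2) with (Z.of_nat (S n) + 1) by lia.
    now rewrite !pmu_of_nat_add1, pfw_succ, pmu_of_nat.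
  - destruct (Z_of_nat_complete (- m - 1)) as [n hn]; [lia|].
    replace m with (- Z.of_nat (S n)) by lia.
    replace (- Z.of_nat (S n) + 2) with (- Z.of_nat n + 1) by lia.
    replace (- Z.of_nat (S n) + 1) with (- Z.of_nat n) by lia.
    rewrite pmu_opp_of_nat, pmu_opp_of_nat_add1, pmu_opp_of_nat, pbw_succ; cbn [fst].
    replace (- Z.of_nat n - 1) with (- Z.of_nat (S n)) by lia.
    lia.
Qed.

Lemma pmu_even_rec : three_term_rec (a1 * a2 - 2) (fun n => p (2 * n)).
Proof.
  intros n; cbv beta.
  assert (e0 := pmu_rec (2 * n)).
  assert (e1 := pmu_rec (2 * (n - 1) + 1)).
  assert (e2 := pmu_rec (2 * (n - 1))).
  rewrite pcoef_even in e0, e2; rewrite pcoef_odd in e1.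
  replace (2 * (n + 1)) with (2 * n + 2) by ring.
  replace (2 * (n - 1) + 1 + 2) with (2 * n + 1) in e1 by ring.
  replace (2 * (n - 1) + 1 + 1) with (2 * n) in e1 by ring.
  replace (2 * (n - 1) + 2) with (2 * n) in e2 by ring.
  rewrite e0, e1.
  nia.
Qed.

End Pmu.

Theorem lemmaB1 (a1 a2 k l : Z) (ha1 : 5 <= a1) (ha2 : a2 = 1) :
  (forall n : Z,
     0 < pmu a1 a2 k l (2 * n) <= pmu a1 a2 k l (2 * n + 2) ->
     forall m : Z, n <= m ->
       0 < pmu a1 a2 k l (2 * m) <= pmu a1 a2 k l (2 * m + 2)) /\
  (forall n : Z,
     0 < pmu a1 a2 k l (2 * n) <= pmu a1 a2 k l (2 * n - 2) ->
     forall m : Z, m <= n ->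
       0 < pmu a1 a2 k l (2 * m) <= pmu a1 a2 k l (2 * m - 2)).
Proof.
  assert (hc : 2 <= a1 * a2 - 2) by (subst; lia).
  assert (hrec := pmu_even_rec a1 a2 k l).
  split; intros n hn m hm.
  - replace (2 * n + 2) with (2 * (n + 1)) in hn by ring.
    replace (2 * m + 2) with (2 * (m + 1)) by ring.
    exact (three_term_rec_nondecr_from _ _ hc hrec n hn m hm).
  - replace (2 * n - 2) with (2 * (n - 1)) in hn by ring.
    replace (2 * m - 2) with (2 * (m - 1)) by ring.
    exact (three_term_rec_nonincr_until _ _ hc hrec n hn m hm).
Qed.
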